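(* Let $n>k\ge1$ be coprime integers, $\eta$ in the upper half-plane, $\Lambda=\mathbb{Z}+\mathbb{Z}\eta$. For all $\tau\in\mathbb{C}\setminus\frac1n\Lambda$ and $z\in\mathbb{C}$, $$R_{n,k,\tau}(z)^{\bullet}=e(-n^2z)\,R_{n,n-k,-\tau}(-z),$$ where for $A\in\mathrm{End}(V\otimes V)$, $A^\bullet$ is the adjoint of $A$ with respect to the symmetric bilinear form on $V\otimes V$ with $\langle x_i\otimes x_k,x_j\otimes x_\ell\rangle=\delta_{ij}\delta_{k\ell}$, i.e. $\langle A^\bullet x,y\rangle=\langle x,Ay\rangle$ for all $x,y$.
   Context: Write $e(z)=e^{2\pi i z}$ and $\theta(z)=\sum_{m\in\mathbb{Z}}(-1)^m e\big(mz+\tfrac12 m(m-1)\eta\big)$. For $\alpha\in\mathbb{Z}$ put $\theta_\alpha(z)=e\big(\alpha z+\tfrac{\alpha}{2n}+\tfrac{\alpha(\alpha-n)}{2n}\eta\big)\prod_{m=0}^{n-1}\theta\big(z+\tfrac mn+\tfrac{\alpha}{n}\eta\big)$, regarded as indexed by $\alpha\in\mathbb{Z}_n$. Let $V$ be an $n$-dimensional complex vector space with basis $x_i$, $i\in\mathbb{Z}_n$. For an integer $1\le k'<n$ coprime to $n$, $\tau\in\mathbb{C}\setminus\frac1n\Lambda$ and $z\in\mathbb{C}$, define $R_{n,k',\tau}(z)\in\mathrm{End}(V\otimes V)$ by $$R_{n,k',\tau}(z)(x_i\otimes x_j)=\frac{\theta_0(-z)\cdots\theta_{n-1}(-z)}{\theta_1(0)\cdots\theta_{n-1}(0)}\sum_{r\in\mathbb{Z}_n}\frac{\theta_{j-i+r(k'-1)}(-z+\tau)}{\theta_{j-i-r}(-z)\,\theta_{k'r}(\tau)}\,x_{j-r}\otimes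 x_{i+r}.$$ *)

From Stdlib Require Import Reals ZArith List.
From Coquelicot Require Import Coquelicot.
Open Scope R_scope.

(* e(w) = exp(2 pi i w), written out with real exp/cos/sin. *)
Definition ee (w : C) : C :=
  (exp (-(2*PI*Im w)) * cos (2*PI*Re w), exp (-(2*PI*Im w)) * sin (2*PI*Re w)).

Definition sgnZ (m : Z) : R := if Z.even m then 1 else -1.

Definition theta_term (eta z : C) (m : Z) : C :=
  Cmult (RtoC (sgnZ m))
    (ee (Cplus (Cmult (RtoC (IZR m)) z)
               (Cmult (RtoC (IZR (m*(m-1)) / 2)) eta))).

(* theta(z) = sum over m in Z, split as m >= 0 and m <= -1, real and
   imaginary parts summed separately (the series converges absolutely
   when Im eta > 0). *)
Definition theta (eta z : C) : C :=
  (Series (fun k => Re (theta_term eta z (Z.of_nat k)))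
     + Series (fun k => Re (theta_term eta z (- Z.of_nat k - 1)%Z)),
   Series (fun k => Im (theta_term eta z (Z.of_nat k)))
     + Series (fun k => Im (theta_term eta z (- Z.of_nat k - 1)%Z))).

Definition idx (n : nat) : list Z := map Z.of_nat (seq 0 n).
Definition csum (l : list Z) (f : Z -> C) : C := fold_right Cplus (RtoC 0) (map f l).
Definition cprod (l : list Z) (f : Z -> C) : C := fold_right Cmult (RtoC 1) (map f l).

(* theta_alpha, alpha regarded in Z_n via its representative in [0,n). *)
Definition theta_alpha (n : nat) (eta : C) (alpha : Z) (z : C) : C :=
  let a := Z.modulo alpha (Z.of_nat n) in
  let nR := INR n in
  Cmult
    (ee (Cplus (Cplus (Cmult (RtoC (IZR a)) z) (RtoC (IZR a / (2 * nR))))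
               (Cmult (RtoC (IZR (a * (a - Z.of_nat n)) / (2 * nR))) eta)))
    (cprod (idx n) (fun m =>
       theta eta (Cplus (Cplus z (RtoC (IZR m / nR))) (Cmult (RtoC (IZR a / nR)) eta)))).

(* Coefficient of the r-th summand of R_{n,k',tau}(z)(x_i (x) x_j).
   The quotient theta_0(-z)...theta_{n-1}(-z) / theta_{j-i-r}(-z) is taken
   as the (entire) product over beta in Z_n with beta <> j-i-r. *)
Definition Rcoef (n k' : nat) (eta tau z : C) (i j r : Z) : C :=
  let nZ := Z.of_nat n in
  Cmult
    (Cdiv (cprod (filter (fun b => negb (Z.eqb b (Z.modulo (j - i - r) nZ))) (idx n))
                 (fun b => theta_alpha n eta b (Copp z)))
          (cprod (map Z.of_nat (seq 1 (n - 1))) (fun b => theta_alpha n eta b (RtoC 0))))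
    (Cdiv (theta_alpha n eta (j - i + r * (Z.of_nat k' - 1)) (Cplus (Copp z) tau))
          (theta_alpha n eta (Z.of_nat k' * r) tau)).

(* Vectors of V (x) V in coordinates: v a b = coefficient of x_a (x) x_b,
   a, b in {0,..,n-1}. *)
Definition Rop (n k' : nat) (eta tau z : C) (v : Z -> Z -> C) : Z -> Z -> C :=
  fun a b =>
    csum (idx n) (fun i => csum (idx n) (fun j => csum (idx n) (fun r =>
      if andb (Z.eqb a (Z.modulo (j - r) (Z.of_nat n))) (Z.eqb b (Z.modulo (i + r) (Z.of_nat n)))
      then Cmult (Rcoef n k' eta tau z i j r) (v i j)
      else RtoC 0))).

Definition bform (n : nat) (u v : Z -> Z -> C) : C :=
  csum (idx n) (fun a => csum (idx n) (fun b => Cmult (u a b) (v a b))).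

(* The coefficients of both operators are quotients of products of the θ_α.
   The functional equations θ(z+1) = θ(z), θ(z+η) = -e(-z) θ(z) and θ(-z) = -e(-z) θ(z)
   give θ_α(-w) = -e(-nw + α/n) θ_{-α}(w) for every α, and, since the product of the
   factors -e(-nw + β/n) over all β ∈ Z_n is -e(-n²w),
     ∏_{β ≠ d} θ_β(-w) = e(-n²w + nw - d/n) ∏_{β ≠ -d} θ_β(w).
   Rewriting every θ-factor of e(-n²z) R_{n,n-k,-τ}(-z) with these identities, all
   exponentials cancel exactly: its coefficient from x_x ⊗ x_y to x_{y-r} ⊗ x_{x+r} equals
   the coefficient of R_{n,k,τ}(z) from x_{y-r} ⊗ x_{x+r} to x_x ⊗ x_y.  The two matrices
   are therefore transposed to each other, which is adjointness for the form; on the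
   level of sums this is the reindexing of Z_n² by the involution (a,b) ↦ (b-r, a+r). *)

From Stdlib Require Import Bool Reals ZArith List Lia Lra Permutation.
From Coquelicot Require Import Coquelicot.
Open Scope R_scope.

Ltac C_parts :=
  apply injective_projections; unfold Cmult, Cplus, Copp, Cminus, RtoC, Re, Im; simpl.

Ltac push_IZR :=
  repeat first [rewrite mult_IZR | rewrite plus_IZR | rewrite minus_IZR | rewrite opp_IZR].

Lemma ee_plus (a b : C) : ee (a + b)%C = (ee a * ee b)%C.
Proof.
  destruct a as [a1 a2], b as [b1 b2]; unfold ee, Cmult, Cplus, Re, Im; simpl.
  replace (2*PI*(a1+b1)) with (2*PI*a1 + 2*PI*b1) by ring.
  replace (-(2*PI*(a2+b2))) with (-(2*PI*a2) + -(2*PI*b2)) by ring.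
  rewrite exp_plus, cos_plus, sin_plus; f_equal; ring.
Qed.

Lemma ee_ext (a b : C) : a = b -> ee a = ee b.
Proof. now intros ->. Qed.

Lemma ee_IZR (t : Z) : ee (IZR t) = 1.
Proof.
  unfold ee, RtoC, Re, Im; simpl.
  replace (2*PI*IZR t) with (2*(IZR t*PI)) by ring.
  rewrite cos_2a_sin, sin_2a, (sin_eq_0_1 (IZR t * PI)) by now exists t.
  replace (-(2*PI*0)) with 0 by ring.
  rewrite exp_0; f_equal; ring.
Qed.

Lemma ee_plus_IZR (w : C) (t : Z) : ee (w + IZR t)%C = ee w.
Proof. rewrite ee_plus, ee_IZR; C_parts; ring. Qed.

Lemma Copp_ee (w : C) : (- ee w)%C = ee (RtoC (1/2) + w)%C.
Proof.
  rewrite ee_plus; unfold ee at 2, RtoC, Re, Im; simpl.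
  replace (2*PI*(1/2)) with PI by field.
  rewrite cos_PI, sin_PI, Rmult_0_r, Ropp_0, exp_0; C_parts; ring.
Qed.

Lemma ee_mult_opp (w : C) : (ee w * ee (- w))%C = 1.
Proof.
  rewrite <- ee_plus, (ee_ext _ (IZR 0)) by (C_parts; ring).
  apply ee_IZR.
Qed.

Lemma ee_neq_0 (w : C) : ee w <> 0.
Proof.
  intros H; pose proof (ee_mult_opp w) as E; rewrite H, Cmult_0_l in E.
  apply (f_equal fst) in E; simpl in E; lra.
Qed.

Lemma Cmod_ee (w : C) : Cmod (ee w) = exp (-(2*PI*Im w)).
Proof.
  unfold Cmod, ee; cbn [fst snd].
  set (t := 2 * PI * Re w).
  replace ((exp (-(2*PI*Im w)) * cos t) ^ 2 + (exp (-(2*PI*Im w)) * sin t) ^ 2)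
    with (exp (-(2*PI*Im w)) ^ 2 * ((sin t)² + (cos t)²)) by (unfold Rsqr; ring).
  rewrite sin2_cos2, Rmult_1_r, <- Rsqr_pow2.
  apply sqrt_Rsqr, Rlt_le, exp_pos.
Qed.

(** * Finite sums and products over Z_n *)

Lemma csum_cons (a : Z) (l : list Z) (f : Z -> C) : csum (a :: l) f = (f a + csum l f)%C.
Proof. reflexivity. Qed.

Lemma cprod_cons (a : Z) (l : list Z) (f : Z -> C) : cprod (a :: l) f = (f a * cprod l f)%C.
Proof. reflexivity. Qed.

Lemma fold_right_map_perm (op : C -> C -> C) (e : C) (f : Z -> C) (l l' : list Z) :
  (forall a b c, op a (op b c) = op b (op a c)) ->
  Permutation l l' -> fold_right op e (map f l) = fold_right op e (map f l').
Proof. intros Hop HP; induction HP; simpl; congruence. Qed.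

Lemma csum_perm (l l' : list Z) (f : Z -> C) : Permutation l l' -> csum l f = csum l' f.
Proof. apply fold_right_map_perm; intros; ring. Qed.

Lemma cprod_perm (l l' : list Z) (f : Z -> C) : Permutation l l' -> cprod l f = cprod l' f.
Proof. apply fold_right_map_perm; intros; ring. Qed.

Lemma csum_ext_in (l : list Z) (f g : Z -> C) :
  (forall x, In x l -> f x = g x) -> csum l f = csum l g.
Proof. intros H; unfold csum; f_equal; now apply map_ext_in. Qed.

Lemma cprod_ext_in (l : list Z) (f g : Z -> C) :
  (forall x, In x l -> f x = g x) -> cprod l f = cprod l g.
Proof. intros H; unfold cprod; f_equal; now apply map_ext_in. Qed.

Lemma csum_map (l : list Z) (s : Z -> Z) (f : Z -> C) :
  csum (map s l) f = csum l (fun x => f (s x)).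
Proof. unfold csum; now rewrite map_map. Qed.

Lemma cprod_map (l : list Z) (s : Z -> Z) (f : Z -> C) :
  cprod (map s l) f = cprod l (fun x => f (s x)).
Proof. unfold cprod; now rewrite map_map. Qed.

Lemma csum_zero (l : list Z) : csum l (fun _ => RtoC 0) = 0.
Proof. induction l as [|a l IH]; [reflexivity|]; rewrite csum_cons, IH; ring. Qed.

Lemma csum_plus (l : list Z) (f g : Z -> C) :
  csum l (fun x => f x + g x)%C = (csum l f + csum l g)%C.
Proof.
  induction l as [|a l IH]; [simpl; C_parts; ring|].
  rewrite !csum_cons, IH; ring.
Qed.

Lemma csum_scal (l : list Z) (c : C) (f : Z -> C) :
  csum l (fun x => c * f x)%C = (c * csum l f)%C.
Proof.
  induction l as [|a l IH]; [simpl; C_parts; ring|].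
  rewrite !csum_cons, IH; ring.
Qed.

Lemma csum_scal_r (l : list Z) (f : Z -> C) (c : C) :
  (csum l f * c)%C = csum l (fun x => f x * c)%C.
Proof. rewrite Cmult_comm, <- csum_scal; apply csum_ext_in; intros; apply Cmult_comm. Qed.

Lemma cprod_mult (l : list Z) (f g : Z -> C) :
  cprod l (fun x => f x * g x)%C = (cprod l f * cprod l g)%C.
Proof.
  induction l as [|a l IH]; [simpl; C_parts; ring|].
  rewrite !cprod_cons, IH; ring.
Qed.

Lemma cprod_app (l1 l2 : list Z) (f : Z -> C) :
  cprod (l1 ++ l2) f = (cprod l1 f * cprod l2 f)%C.
Proof.
  induction l1 as [|a l1 IH]; [simpl; C_parts; ring|].
  rewrite <- app_comm_cons, !cprod_cons, IH; ring.
Qed.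

Lemma csum_swap (l1 l2 : list Z) (f : Z -> Z -> C) :
  csum l1 (fun x => csum l2 (fun y => f x y)) = csum l2 (fun y => csum l1 (fun x => f x y)).
Proof.
  induction l1 as [|a l1 IH]; [symmetry; apply csum_zero|].
  rewrite csum_cons, IH, <- csum_plus; reflexivity.
Qed.

Lemma csum3_swap (l : list Z) (f : Z -> Z -> Z -> C) :
  csum l (fun a => csum l (fun b => csum l (fun r => f a b r)))
  = csum l (fun r => csum l (fun a => csum l (fun b => f a b r))).
Proof.
  rewrite (csum_ext_in _ _ (fun a => csum l (fun r => csum l (fun b => f a b r))))
    by (intros; apply csum_swap).
  apply csum_swap.
Qed.

Lemma csum_delta (l : list Z) (p : Z -> bool) (g : Z -> C) (x0 : Z) :
  NoDup l -> In x0 l -> (forall x, In x l -> (p x = true <-> x = x0)) ->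
  csum l (fun x => if p x then g x else RtoC 0) = g x0.
Proof.
  induction l as [|a l IH]; simpl; intros Hnd Hin Hp; [contradiction|].
  inversion_clear Hnd as [|? ? Ha Hl].
  rewrite csum_cons.
  destruct Hin as [<-|Hin].
  - rewrite (proj2 (Hp a (or_introl eq_refl)) eq_refl).
    rewrite (csum_ext_in l _ (fun _ => RtoC 0)), csum_zero; [C_parts; ring|].
    intros x Hx; destruct (p x) eqn:E; auto.
    apply Hp in E; [subst; contradiction | now right].
  - assert (p a = false) as ->.
    { destruct (p a) eqn:E; auto; apply Hp in E; [subst; contradiction | now left]. }
    rewrite IH; auto; C_parts; ring.
Qed.

Lemma cprod_filter (l : list Z) (p : Z -> bool) (f : Z -> C) :
  cprod (filter p l) f = cprod l (fun b => if p b then f b else RtoC 1).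
Proof.
  induction l as [|a l IH]; [reflexivity|]; cbn [filter].
  rewrite cprod_cons, <- IH; destruct (p a); [reflexivity | ring].
Qed.

Lemma cprod_except (l : list Z) (d : Z) (f : Z -> C) : NoDup l -> In d l ->
  cprod l f = (f d * cprod (filter (fun b => negb (b =? d)%Z) l) f)%C.
Proof.
  induction l as [|a l IH]; simpl; intros Hnd Hin; [contradiction|].
  inversion_clear Hnd as [|? ? Ha Hl].
  rewrite !cprod_cons.
  destruct (Z.eqb_spec a d) as [->|Had]; simpl.
  - rewrite forallb_filter_id; [reflexivity|].
    apply forallb_forall; intros x Hx.
    destruct (Z.eqb_spec x d); [subst; contradiction | reflexivity].
  - destruct Hin as [->|Hin]; [contradiction|].
    rewrite cprod_cons, IH by auto; ring.
Qed.

Lemma in_idx (n : nat) (x : Z) : In x (idx n) <-> (0 <= x < Z.of_nat n)%Z.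
Proof.
  unfold idx; rewrite in_map_iff; split.
  - intros [m [<- Hm]]; apply in_seq in Hm; lia.
  - intros H; exists (Z.to_nat x); rewrite in_seq; lia.
Qed.

Lemma NoDup_idx (n : nat) : NoDup (idx n).
Proof. apply FinFun.Injective_map_NoDup; [intros a b; lia | apply seq_NoDup]. Qed.

Lemma csum_idx_delta2 (n : nat) (p q : Z -> bool) (F : Z -> Z -> C) (i0 j0 : Z) :
  (0 <= i0 < Z.of_nat n)%Z -> (0 <= j0 < Z.of_nat n)%Z ->
  (forall i, (0 <= i < Z.of_nat n)%Z -> (p i = true <-> i = i0)) ->
  (forall j, (0 <= j < Z.of_nat n)%Z -> (q j = true <-> j = j0)) ->
  csum (idx n) (fun i => csum (idx n) (fun j => if andb (q j) (p i) then F i j else RtoC 0))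
  = F i0 j0.
Proof.
  intros Hi0 Hj0 Hp Hq.
  rewrite (csum_ext_in _ _ (fun i => if p i then F i j0 else RtoC 0)).
  - apply (csum_delta _ p (fun i => F i j0)); [apply NoDup_idx | now apply in_idx |].
    intros i Hi; apply in_idx in Hi; auto.
  - intros i _; destruct (p i).
    + rewrite (csum_ext_in _ _ (fun j => if q j then F i j else RtoC 0))
        by (intros j _; now destruct (q j)).
      apply (csum_delta _ q (F i)); [apply NoDup_idx | now apply in_idx |].
      intros j Hj; apply in_idx in Hj; auto.
    + rewrite (csum_ext_in _ _ (fun _ => RtoC 0)) by (intros j _; now destruct (q j)).
      apply csum_zero.
Qed.

Definition onto_idx (n : nat) (s : Z -> Z) : Prop :=
  forall y, (0 <= y < Z.of_nat n)%Z -> exists x, (0 <= x < Z.of_nat n)%Z /\ s x = y.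

Lemma Permutation_idx_map (n : nat) (s : Z -> Z) :
  onto_idx n s -> Permutation (idx n) (map s (idx n)).
Proof.
  intros Hs; apply NoDup_Permutation_bis; [apply NoDup_idx | now rewrite length_map |].
  intros y Hy; apply in_idx, Hs in Hy as [x [Hx <-]].
  now apply in_map, in_idx.
Qed.

Lemma csum_idx_reindex (n : nat) (s : Z -> Z) (f : Z -> C) :
  onto_idx n s -> csum (idx n) (fun x => f (s x)) = csum (idx n) f.
Proof. intros Hs; rewrite <- csum_map; symmetry; apply csum_perm, Permutation_idx_map, Hs. Qed.

Lemma cprod_idx_reindex (n : nat) (s : Z -> Z) (f : Z -> C) :
  onto_idx n s -> cprod (idx n) (fun x => f (s x)) = cprod (idx n) f.
Proof. intros Hs; rewrite <- cprod_map; symmetry; apply cprod_perm, Permutation_idx_map, Hs. Qed.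

Lemma Zmod_add_sub_small (N a r : Z) : (0 <= a < N)%Z -> (((a + r) mod N - r) mod N)%Z = a.
Proof. intros Ha; rewrite Zminus_mod_idemp_l, Z.add_simpl_r; now apply Z.mod_small. Qed.

Lemma Zmod_sub_add_small (N a r : Z) : (0 <= a < N)%Z -> (((a - r) mod N + r) mod N)%Z = a.
Proof. intros Ha; rewrite Z.add_mod_idemp_l, Z.sub_add by lia; now apply Z.mod_small. Qed.

Lemma Zmod_sub_eq_iff (N a j r : Z) : (0 <= a < N)%Z -> (0 <= j < N)%Z ->
  a = ((j - r) mod N)%Z <-> j = ((a + r) mod N)%Z.
Proof.
  intros Ha Hj; split; intros ->; [now rewrite Zmod_sub_add_small | now rewrite Zmod_add_sub_small].
Qed.

Lemma Zmod_add_eq_iff (N b i r : Z) : (0 <= b < N)%Z -> (0 <= i < N)%Z ->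
  b = ((i + r) mod N)%Z <-> i = ((b - r) mod N)%Z.
Proof.
  intros Hb Hi; split; intros ->; [now rewrite Zmod_add_sub_small | now rewrite Zmod_sub_add_small].
Qed.

Lemma Zmod_opp_eqb (N b d : Z) : (0 <= b < N)%Z ->
  ((- b) mod N =? (- d) mod N)%Z = (b =? d mod N)%Z.
Proof.
  intros Hb; apply eq_true_iff_eq; rewrite !Z.eqb_eq.
  transitivity (b mod N = d mod N)%Z; [|now rewrite Z.mod_small].
  rewrite !Z.cong_iff_ex; split; intros [q Hq]; exists (- q)%Z; lia.
Qed.

Lemma IZR_div_mod (n : nat) (x : Z) : (0 < n)%nat ->
  IZR x = INR n * IZR (x / Z.of_nat n) + IZR (x mod Z.of_nat n).
Proof.
  intros Hn; rewrite INR_IZR_INZ, <- mult_IZR, <- plus_IZR; f_equal.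
  apply Z_div_mod_eq_full.
Qed.

Lemma onto_idx_add (n : nat) (s : Z) : onto_idx n (fun x => ((x + s) mod Z.of_nat n)%Z).
Proof.
  intros y Hy; exists ((y - s) mod Z.of_nat n)%Z.
  split; [apply Z.mod_pos_bound; lia | now apply Zmod_sub_add_small].
Qed.

Lemma onto_idx_sub (n : nat) (s : Z) : onto_idx n (fun x => ((x - s) mod Z.of_nat n)%Z).
Proof.
  intros y Hy; exists ((y + s) mod Z.of_nat n)%Z.
  split; [apply Z.mod_pos_bound; lia | now apply Zmod_add_sub_small].
Qed.

Lemma onto_idx_opp (n : nat) : onto_idx n (fun x => ((- x) mod Z.of_nat n)%Z).
Proof.
  intros y Hy; exists ((- y) mod Z.of_nat n)%Z.
  split; [apply Z.mod_pos_bound; lia|].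
  rewrite Z.mod_opp_mod_opp; now apply Z.mod_small.
Qed.

Lemma csum2_idx_flip (n : nat) (r : Z) (G : Z -> Z -> C) :
  csum (idx n) (fun a => csum (idx n) (fun b =>
    G ((b - r) mod Z.of_nat n)%Z ((a + r) mod Z.of_nat n)%Z))
  = csum (idx n) (fun a => csum (idx n) (fun b => G a b)).
Proof.
  rewrite csum_swap.
  rewrite (csum_ext_in _ _ (fun b => csum (idx n) (G ((b - r) mod Z.of_nat n)%Z)))
    by (intros; apply (csum_idx_reindex n _ _ (onto_idx_add n r))).
  apply (csum_idx_reindex n _ (fun x => csum (idx n) (G x)) (onto_idx_sub n r)).
Qed.

Lemma cprod_ee_progression (N : nat) (A : C) (c : R) :
  cprod (idx N) (fun m => ee (A + RtoC (IZR m * c))%C)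
  = ee (RtoC (INR N) * A + RtoC (INR N * (INR N - 1) / 2 * c))%C.
Proof.
  induction N as [|N IH].
  - rewrite (ee_ext _ (IZR 0)), ee_IZR by (simpl; C_parts; field); reflexivity.
  - unfold idx; rewrite seq_S, map_app, cprod_app; fold (idx N); rewrite IH.
    unfold cprod; cbn [map fold_right Nat.add]; rewrite Cmult_1_r, <- ee_plus.
    apply ee_ext; rewrite <- INR_IZR_INZ, S_INR; C_parts; field.
Qed.

(* The product is (-1)^n e(nA + (n-1)/2), and e((n-1)/2) = (-1)^(n-1). *)
Lemma cprod_Copp_ee_roots (n : nat) (A : C) : (0 < n)%nat ->
  cprod (idx n) (fun m => - ee (A + RtoC (IZR m / INR n)))%C = (- ee (RtoC (INR n) * A))%C.
Proof.
  intros Hn; assert (INR n <> 0) by (apply not_0_INR; lia).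
  rewrite (cprod_ext_in _ _ (fun m => ee ((RtoC (1/2) + A) + RtoC (IZR m * / INR n)))%C)
    by (intros; rewrite Copp_ee; apply ee_ext; C_parts; field; auto).
  rewrite cprod_ee_progression, Copp_ee; symmetry.
  rewrite <- (ee_plus_IZR _ (Z.of_nat n - 1)).
  apply ee_ext; rewrite minus_IZR, <- INR_IZR_INZ; C_parts; field; auto.
Qed.

Lemma cprod_Copp_ee_roots_except (n : nat) (A : C) (d : Z) : (0 <= d < Z.of_nat n)%Z ->
  cprod (filter (fun b => negb (b =? d)%Z) (idx n)) (fun b => - ee (A + RtoC (IZR b / INR n)))%C
  = ee (RtoC (INR n - 1) * A - RtoC (IZR d / INR n))%C.
Proof.
  intros Hd; assert (Hn : (0 < n)%nat) by lia.
  assert (INR n <> 0) by (apply not_0_INR; lia).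
  pose proof (cprod_Copp_ee_roots n A Hn) as Hfull.
  rewrite (cprod_except _ d) in Hfull by (apply NoDup_idx || now apply in_idx).
  cbv beta in Hfull; set (X := cprod _ _) in *; set (a := (A + RtoC (IZR d / INR n))%C) in *.
  pose proof (ee_mult_opp a) as E.
  transitivity (X * (ee a * ee (- a)))%C; [rewrite E; ring|].
  transitivity ((- ee a * X) * - ee (- a))%C; [ring|].
  rewrite Hfull; transitivity (ee (RtoC (INR n) * A) * ee (- a))%C; [ring|].
  rewrite <- ee_plus; apply ee_ext; unfold a; C_parts; field; auto.
Qed.

(** * Bilateral series *)

Definition Zseries (g : Z -> R) : R :=
  Series (fun k => g (Z.of_nat k)) + Series (fun k => g (- Z.of_nat k - 1)%Z).

Definition ex_Zseries (g : Z -> R) : Prop :=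
  ex_series (fun k => g (Z.of_nat k)) /\ ex_series (fun k => g (- Z.of_nat k - 1)%Z).

Lemma Zseries_ext (g h : Z -> R) : (forall m, g m = h m) -> Zseries g = Zseries h.
Proof. intros H; unfold Zseries; f_equal; apply Series_ext; auto. Qed.

Lemma ex_Zseries_le (g h : Z -> R) :
  (forall m, Rabs (g m) <= h m) -> ex_Zseries h -> ex_Zseries g.
Proof.
  intros H [H1 H2]; split.
  - now apply (ex_series_le (fun k => g (Z.of_nat k)) (fun k => h (Z.of_nat k))).
  - now apply (ex_series_le (fun k => g (- Z.of_nat k - 1)%Z) (fun k => h (- Z.of_nat k - 1)%Z)).
Qed.

Lemma ex_Zseries_succ (g : Z -> R) : ex_Zseries g -> ex_Zseries (fun m => g (m + 1)%Z).
Proof.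
  intros [H1 H2]; split.
  - apply ex_series_incr_1 in H1; eapply ex_series_ext; [|exact H1].
    intros k; cbv beta; f_equal; lia.
  - apply ex_series_incr_1; eapply ex_series_ext; [|exact H2].
    intros k; cbv beta; f_equal; lia.
Qed.

Lemma ex_Zseries_opp (g : Z -> R) : ex_Zseries g -> ex_Zseries (fun m => g (- m)%Z).
Proof.
  intros [H1 H2]; split.
  - apply ex_series_incr_1; eapply ex_series_ext; [|exact H2].
    intros k; cbv beta; f_equal; lia.
  - apply ex_series_incr_1 in H1; eapply ex_series_ext; [|exact H1].
    intros k; cbv beta; f_equal; lia.
Qed.

Lemma Zseries_succ (g : Z -> R) : ex_Zseries g -> Zseries (fun m => g (m + 1)%Z) = Zseries g.
Proof.
  intros [H1 H2]; pose proof (ex_Zseries_succ g (conj H1 H2)) as [_ H3].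
  unfold Zseries; rewrite (Series_incr_1 _ H1), (Series_incr_1 _ H3).
  rewrite (Series_ext (fun k => g (Z.of_nat k + 1)%Z) (fun k => g (Z.of_nat (S k))))
    by (intros; f_equal; lia).
  rewrite (Series_ext (fun k => g (- Z.of_nat (S k) - 1 + 1)%Z) (fun k => g (- Z.of_nat k - 1)%Z))
    by (intros; f_equal; lia).
  simpl; ring.
Qed.

Lemma Zseries_opp (g : Z -> R) : ex_Zseries g -> Zseries (fun m => g (- m)%Z) = Zseries g.
Proof.
  intros [H1 H2]; pose proof (ex_Zseries_opp g (conj H1 H2)) as [H3 _].
  unfold Zseries; rewrite (Series_incr_1 _ H1), (Series_incr_1 _ H3).
  rewrite (Series_ext (fun k => g (- Z.of_nat (S k))%Z) (fun k => g (- Z.of_nat k - 1)%Z))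
    by (intros; f_equal; lia).
  rewrite (Series_ext (fun k => g (- (- Z.of_nat k - 1))%Z) (fun k => g (Z.of_nat (S k))))
    by (intros; f_equal; lia).
  simpl; ring.
Qed.

Lemma Zseries_lincomb (a b : R) (g h : Z -> R) : ex_Zseries g -> ex_Zseries h ->
  Zseries (fun m => a * g m + b * h m) = a * Zseries g + b * Zseries h.
Proof.
  intros [G1 G2] [H1 H2]; unfold Zseries.
  rewrite !Series_plus, !Series_scal_l; [ring|..];
    apply (@ex_series_scal_l R_AbsRing R_NormedModule); assumption.
Qed.

Definition CZseries (f : Z -> C) : C :=
  (Zseries (fun m => Re (f m)), Zseries (fun m => Im (f m))).

Definition ex_CZseries_Cmod (f : Z -> C) : Prop := ex_Zseries (fun m => Cmod (f m)).

Lemma CZseries_ext (f g : Z -> C) : (forall m, f m = g m) -> CZseries f = CZseries g.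
Proof. intros H; unfold CZseries; f_equal; apply Zseries_ext; intros; now rewrite H. Qed.

Lemma im_le_Cmod (c : C) : Rabs (Im c) <= Cmod c.
Proof.
  unfold Cmod; rewrite <- sqrt_Rsqr_abs; apply sqrt_le_1_alt.
  destruct c; unfold Rsqr; simpl; nra.
Qed.

Lemma ex_Zseries_Re (f : Z -> C) : ex_CZseries_Cmod f -> ex_Zseries (fun m => Re (f m)).
Proof. apply ex_Zseries_le; intros; apply re_le_Cmod. Qed.

Lemma ex_Zseries_Im (f : Z -> C) : ex_CZseries_Cmod f -> ex_Zseries (fun m => Im (f m)).
Proof. apply ex_Zseries_le; intros; apply im_le_Cmod. Qed.

Lemma CZseries_succ (f : Z -> C) : ex_CZseries_Cmod f -> CZseries (fun m => f (m + 1)%Z) = CZseries f.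
Proof.
  intros H; unfold CZseries; f_equal.
  - now apply (Zseries_succ (fun m => Re (f m))), ex_Zseries_Re.
  - now apply (Zseries_succ (fun m => Im (f m))), ex_Zseries_Im.
Qed.

Lemma CZseries_opp (f : Z -> C) : ex_CZseries_Cmod f -> CZseries (fun m => f (- m)%Z) = CZseries f.
Proof.
  intros H; unfold CZseries; f_equal.
  - now apply (Zseries_opp (fun m => Re (f m))), ex_Zseries_Re.
  - now apply (Zseries_opp (fun m => Im (f m))), ex_Zseries_Im.
Qed.

Lemma CZseries_scal (c : C) (f : Z -> C) : ex_CZseries_Cmod f ->
  CZseries (fun m => c * f m)%C = (c * CZseries f)%C.
Proof.
  intros H; pose proof (ex_Zseries_Re f H); pose proof (ex_Zseries_Im f H).
  unfold CZseries; C_parts.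
  - rewrite (Zseries_ext _ (fun m => fst c * Re (f m) + - snd c * Im (f m)))
      by (intros; unfold Re, Im; ring).
    rewrite Zseries_lincomb by auto; unfold Re, Im; ring.
  - rewrite (Zseries_ext _ (fun m => fst c * Im (f m) + snd c * Re (f m)))
      by (intros; unfold Re, Im; ring).
    rewrite Zseries_lincomb by auto; unfold Re, Im; ring.
Qed.

(** * Functional equations of theta *)

Lemma theta_CZseries (eta z : C) : theta eta z = CZseries (theta_term eta z).
Proof. reflexivity. Qed.

Lemma sgnZ_succ (m : Z) : sgnZ (m + 1) = - sgnZ m.
Proof. unfold sgnZ; rewrite Z.even_add; now destruct (Z.even m); simpl; ring. Qed.

Lemma sgnZ_opp (m : Z) : sgnZ (- m) = sgnZ m.
Proof. unfold sgnZ; now rewrite Z.even_opp. Qed.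

Lemma Rabs_sgnZ (m : Z) : Rabs (sgnZ m) = 1.
Proof. unfold sgnZ, Rabs; destruct (Z.even m), Rcase_abs; lra. Qed.

Lemma Cmod_theta_term (eta z : C) (m : Z) :
  Cmod (theta_term eta z m)
  = exp (-(2*PI*(IZR m * Im z + IZR m * (IZR m - 1) / 2 * Im eta))).
Proof.
  unfold theta_term; rewrite Cmod_mult, Cmod_R, Rabs_sgnZ, Rmult_1_l, Cmod_ee.
  do 3 f_equal; rewrite mult_IZR, minus_IZR; unfold Im; simpl; field.
Qed.

Lemma quadratic_lower_bound (x y s m : R) : 0 < y ->
  m * x + m * (m - 1) / 2 * y - s * m >= - ((x - y/2 - s)^2 / (2*y)).
Proof.
  intros Hy.
  assert (0 <= (y*m + (x - y/2 - s))^2 / (2*y)) by (apply Rle_mult_inv_pos; [apply pow2_ge_0 | lra]).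
  assert (m * x + m * (m - 1) / 2 * y - s * m + (x - y/2 - s)^2 / (2*y)
          = (y*m + (x - y/2 - s))^2 / (2*y)) by (field; lra).
  lra.
Qed.

Lemma exp_pow_INR (a : R) (k : nat) : exp a ^ k = exp (INR k * a).
Proof.
  induction k as [|k IH]; [simpl; now rewrite Rmult_0_l, exp_0|].
  rewrite S_INR; cbn [pow]; rewrite IH, <- exp_plus; f_equal; ring.
Qed.

Lemma ex_series_exp_le (u : nat -> R) (B c : R) :
  0 < c -> (forall k, u k <= B - c * INR k) -> ex_series (fun k => exp (u k)).
Proof.
  intros Hc Hu.
  apply (ex_series_le (fun k => exp (u k)) (fun k => exp B * exp (- c) ^ k)).
  - intros k; change norm with Rabs; rewrite Rabs_pos_eq by apply Rlt_le, exp_pos.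
    rewrite exp_pow_INR, <- exp_plus.
    destruct (Rle_lt_or_eq_dec _ _ (Hu k)) as [H|H]; [apply Rlt_le, exp_increasing|right; f_equal]; lra.
  - apply (@ex_series_scal_l R_AbsRing R_NormedModule), ex_series_geom.
    rewrite Rabs_pos_eq by apply Rlt_le, exp_pos.
    rewrite <- exp_0; apply exp_increasing; lra.
Qed.

Lemma ex_theta_term (eta z : C) : 0 < Im eta -> ex_CZseries_Cmod (theta_term eta z).
Proof.
  intros Hy; pose proof PI_RGT_0.
  set (x := Im z); set (y := Im eta).
  split; eapply ex_series_ext; try (intros k; symmetry; apply Cmod_theta_term).
  - apply (ex_series_exp_le _ (2 * PI * ((x - y/2 - 1)^2 / (2*y))) (2 * PI)); [lra|intros k].
    pose proof (quadratic_lower_bound x y 1 (INR k) Hy).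
    rewrite <- INR_IZR_INZ; fold x y; nra.
  - apply (ex_series_exp_le _ (2 * PI * ((x - y/2 + 1)^2 / (2*y))) (2 * PI)); [lra|intros k].
    pose proof (quadratic_lower_bound x y (-1) (- INR k - 1) Hy).
    rewrite minus_IZR, opp_IZR, <- INR_IZR_INZ; fold x y.
    replace (x - y/2 - -1) with (x - y/2 + 1) in * by ring.
    pose proof (pos_INR k); nra.
Qed.

Lemma theta_term_plus_IZR (eta z : C) (t m : Z) :
  theta_term eta (z + IZR t)%C m = theta_term eta z m.
Proof.
  unfold theta_term; f_equal; symmetry; rewrite <- (ee_plus_IZR _ (m * t)).
  apply ee_ext; C_parts; push_IZR; ring.
Qed.

Lemma theta_plus_IZR (eta z : C) (t : Z) : theta eta (z + IZR t)%C = theta eta z.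
Proof. rewrite !theta_CZseries; apply CZseries_ext; intros; apply theta_term_plus_IZR. Qed.

Lemma theta_term_plus_eta (eta z : C) (m : Z) :
  theta_term eta (z + eta)%C m = (- ee (- z) * theta_term eta z (m + 1))%C.
Proof.
  unfold theta_term; rewrite sgnZ_succ, RtoC_opp.
  rewrite (ee_ext (RtoC (IZR (m + 1)) * z + RtoC (IZR ((m + 1) * (m + 1 - 1)) / 2) * eta)%C
                  (z + (RtoC (IZR m) * (z + eta) + RtoC (IZR (m * (m - 1)) / 2) * eta))%C)
    by (C_parts; push_IZR; field).
  rewrite (ee_plus z); pose proof (ee_mult_opp z) as E.
  set (W := ee _); set (s := RtoC (sgnZ m)).
  transitivity (s * W * (ee z * ee (- z)))%C; [rewrite E|]; ring.
Qed.

Lemma theta_plus_eta (eta z : C) : 0 < Im eta ->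
  theta eta (z + eta)%C = (- ee (- z) * theta eta z)%C.
Proof.
  intros Hy; pose proof (ex_theta_term eta z Hy) as Hsum.
  rewrite !theta_CZseries, (CZseries_ext _ _ (theta_term_plus_eta eta z)).
  rewrite CZseries_scal, (CZseries_succ (theta_term eta z)); [reflexivity | exact Hsum|].
  now apply (ex_Zseries_succ (fun m => Cmod (theta_term eta z m))).
Qed.

Lemma theta_term_opp (eta z : C) (m : Z) :
  theta_term eta (- z)%C m = (- ee (- z) * theta_term eta z (- m + 1))%C.
Proof.
  unfold theta_term; rewrite sgnZ_succ, sgnZ_opp, RtoC_opp.
  rewrite (ee_ext (RtoC (IZR (- m + 1)) * z + RtoC (IZR ((- m + 1) * (- m + 1 - 1)) / 2) * eta)%C
                  (z + (RtoC (IZR m) * (- z) + RtoC (IZR (m * (m - 1)) / 2) * eta))%C)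
    by (C_parts; push_IZR; field).
  rewrite (ee_plus z); pose proof (ee_mult_opp z) as E.
  set (W := ee _); set (s := RtoC (sgnZ m)).
  transitivity (s * W * (ee z * ee (- z)))%C; [rewrite E|]; ring.
Qed.

Lemma theta_opp (eta z : C) : 0 < Im eta -> theta eta (- z)%C = (- ee (- z) * theta eta z)%C.
Proof.
  intros Hy; pose proof (ex_theta_term eta z Hy) as Hsum.
  assert (Hsucc : ex_CZseries_Cmod (fun m => theta_term eta z (m + 1)%Z))
    by now apply (ex_Zseries_succ (fun m => Cmod (theta_term eta z m))).
  rewrite !theta_CZseries, (CZseries_ext _ _ (theta_term_opp eta z)).
  rewrite CZseries_scal by now apply (ex_Zseries_opp (fun m => Cmod (theta_term eta z (m + 1)))).
  rewrite (CZseries_opp (fun m => theta_term eta z (m + 1))), CZseries_succ by auto.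
  reflexivity.
Qed.

Lemma theta_opp_plus_eta (eta y : C) : 0 < Im eta -> theta eta (- y + eta)%C = theta eta y.
Proof.
  intros Hy; rewrite theta_plus_eta, theta_opp by auto.
  replace (- - y)%C with y by ring.
  pose proof (ee_mult_opp y) as E.
  transitivity ((ee y * ee (- y)) * theta eta y)%C; [ring | rewrite E; ring].
Qed.


(** * The functions theta_alpha *)

Definition theta_prefactor (n : nat) (eta : C) (a : Z) (z : C) : C :=
  ee (RtoC (IZR a) * z + RtoC (IZR a / (2 * INR n))
      + RtoC (IZR (a * (a - Z.of_nat n)) / (2 * INR n)) * eta)%C.

Definition theta_factors (n : nat) (eta : C) (a : Z) (z : C) : C :=
  cprod (idx n) (fun m => theta eta (z + RtoC (IZR m / INR n) + RtoC (IZR a / INR n) * eta)%C).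

Lemma theta_alpha_split (n : nat) (eta : C) (al : Z) (z : C) :
  theta_alpha n eta al z
  = (theta_prefactor n eta (al mod Z.of_nat n) z * theta_factors n eta (al mod Z.of_nat n) z)%C.
Proof. reflexivity. Qed.

Lemma theta_alpha_mod (n : nat) (eta : C) (x y : Z) (w : C) :
  (x mod Z.of_nat n = y mod Z.of_nat n)%Z -> theta_alpha n eta x w = theta_alpha n eta y w.
Proof. intros H; now rewrite !theta_alpha_split, H. Qed.

Lemma theta_prefactor_0 (n : nat) (eta z : C) : theta_prefactor n eta 0 z = 1.
Proof.
  unfold theta_prefactor; rewrite (ee_ext _ (IZR 0)) by (C_parts; unfold Rdiv; ring).
  apply ee_IZR.
Qed.

Lemma theta_prefactor_opp (n : nat) (eta : C) (a : Z) (w : C) : (0 < n)%nat ->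
  theta_prefactor n eta a (- w)%C
  = (- ee (- (RtoC (INR n) * w) + RtoC (IZR a / INR n))
     * theta_prefactor n eta (Z.of_nat n - a) w)%C.
Proof.
  intros Hn; assert (INR n <> 0) by (apply not_0_INR; lia).
  unfold theta_prefactor; rewrite Copp_ee, <- ee_plus, <- (ee_plus_IZR _ 1).
  apply ee_ext; push_IZR; rewrite <- INR_IZR_INZ; C_parts; field; auto.
Qed.

Lemma theta_factors_reflect (n : nat) (eta : C) (a : Z) (w : C) : (0 < n)%nat ->
  cprod (idx n) (fun m => theta eta (w - RtoC (IZR m / INR n) + RtoC (IZR a / INR n) * eta)%C)
  = theta_factors n eta a w.
Proof.
  intros Hn; assert (INR n <> 0) by (apply not_0_INR; lia).
  unfold theta_factors; rewrite <- (cprod_idx_reindex n _ _ (onto_idx_opp n)).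
  apply cprod_ext_in; intros m _.
  rewrite <- (theta_plus_IZR eta _ (- ((- m) / Z.of_nat n))); f_equal.
  pose proof (IZR_div_mod n (- m) Hn) as E; rewrite opp_IZR in E.
  replace (IZR ((- m) mod Z.of_nat n)) with (- IZR m - INR n * IZR ((- m) / Z.of_nat n)) by lra.
  rewrite opp_IZR; C_parts; field; auto.
Qed.

Lemma theta_factors_opp (n : nat) (eta : C) (a : Z) (w : C) : (0 < n)%nat -> 0 < Im eta ->
  theta_factors n eta a (- w)%C = theta_factors n eta (Z.of_nat n - a) w.
Proof.
  intros Hn Hy; assert (INR n <> 0) by (apply not_0_INR; lia).
  rewrite <- (theta_factors_reflect n eta (Z.of_nat n - a) w Hn); unfold theta_factors.
  apply cprod_ext_in; intros m _; rewrite <- (theta_opp_plus_eta eta _ Hy); f_equal.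
  rewrite minus_IZR, <- INR_IZR_INZ; C_parts; field; auto.
Qed.

Lemma theta_factors_opp_0 (n : nat) (eta w : C) : (0 < n)%nat -> 0 < Im eta ->
  theta_factors n eta 0 (- w)%C = (- ee (- (RtoC (INR n) * w)) * theta_factors n eta 0 w)%C.
Proof.
  intros Hn Hy; assert (INR n <> 0) by (apply not_0_INR; lia).
  rewrite (ee_ext _ (RtoC (INR n) * - w)) by (C_parts; ring).
  rewrite <- cprod_Copp_ee_roots, <- (theta_factors_reflect n eta 0 w), <- cprod_mult by auto.
  unfold theta_factors; apply cprod_ext_in; intros m _.
  rewrite (ee_ext _ (- (w - RtoC (IZR m / INR n) + RtoC (IZR 0 / INR n) * eta)))%C
    by (C_parts; field; auto).
  rewrite <- theta_opp by auto; f_equal; C_parts; field; auto.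
Qed.

Lemma theta_alpha_opp (n : nat) (eta : C) (al : Z) (w : C) : (0 < n)%nat -> 0 < Im eta ->
  theta_alpha n eta al (- w)%C
  = (- ee (- (RtoC (INR n) * w) + RtoC (IZR al / INR n)) * theta_alpha n eta (- al) w)%C.
Proof.
  intros Hn Hy; assert (INR n <> 0) by (apply not_0_INR; lia).
  rewrite (IZR_div_mod n al), !theta_alpha_split by auto.
  set (q := (al / Z.of_nat n)%Z); set (a := (al mod Z.of_nat n)%Z).
  rewrite (ee_ext _ (- (RtoC (INR n) * w) + RtoC (IZR a / INR n) + RtoC (IZR q))%C), ee_plus_IZR
    by (C_parts; field; auto).
  destruct (Z.eq_dec a 0) as [Ha0|Ha0].
  - rewrite Z.mod_opp_l_z by (lia || exact Ha0); fold a; rewrite Ha0.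
    rewrite !theta_prefactor_0, theta_factors_opp_0 by auto.
    rewrite (ee_ext (_ + RtoC (IZR 0 / INR n)) (- (RtoC (INR n) * w))) by (C_parts; field; auto).
    ring.
  - rewrite Z.mod_opp_l_nz by (lia || exact Ha0); fold a.
    rewrite theta_prefactor_opp, theta_factors_opp by auto; ring.
Qed.

Definition theta_prod_except (n : nat) (eta : C) (d : Z) (w : C) : C :=
  cprod (filter (fun b => negb (b =? d mod Z.of_nat n)%Z) (idx n))
    (fun b => theta_alpha n eta b w).

Lemma theta_prod_except_mod (n : nat) (eta : C) (d d' : Z) (w : C) :
  (d mod Z.of_nat n = d' mod Z.of_nat n)%Z ->
  theta_prod_except n eta d w = theta_prod_except n eta d' w.
Proof. intros H; unfold theta_prod_except; now rewrite H. Qed.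

(* Only the exponential factors are divided out: they never vanish, the theta factors may. *)
Lemma theta_prod_except_opp (n : nat) (eta : C) (d : Z) (w : C) : (0 < n)%nat -> 0 < Im eta ->
  theta_prod_except n eta d (- w)%C
  = (ee (- (RtoC (INR n ^ 2) * w) + RtoC (INR n) * w - RtoC (IZR d / INR n))
     * theta_prod_except n eta (- d) w)%C.
Proof.
  intros Hn Hy; assert (INR n <> 0) by (apply not_0_INR; lia).
  set (N := Z.of_nat n); set (d' := (d mod N)%Z).
  assert (Hd' : (0 <= d' < N)%Z) by (apply Z.mod_pos_bound; lia).
  unfold theta_prod_except; fold N d'.
  rewrite (cprod_ext_in _ _ (fun b =>
    - ee (- (RtoC (INR n) * w) + RtoC (IZR b / INR n)) * theta_alpha n eta (- b) w)%C)
    by (intros; now apply theta_alpha_opp).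
  rewrite cprod_mult; f_equal.
  - rewrite cprod_Copp_ee_roots_except by exact Hd'; symmetry.
    rewrite <- (ee_plus_IZR _ (d / N)), (IZR_div_mod n d) by auto; fold N d'.
    apply ee_ext; C_parts; field; auto.
  - rewrite !cprod_filter; symmetry.
    rewrite <- (cprod_idx_reindex n _ _ (onto_idx_opp n)).
    apply cprod_ext_in; intros b Hb; apply in_idx in Hb; fold N.
    rewrite Zmod_opp_eqb by auto; fold d'.
    destruct (b =? d')%Z; [reflexivity|].
    apply theta_alpha_mod; now rewrite Zmod_mod.
Qed.

(** * The operators R_{n,k,tau}(z) *)

Definition theta_alpha_prod_0 (n : nat) (eta : C) : C :=
  cprod (map Z.of_nat (seq 1 (n - 1))) (fun b => theta_alpha n eta b (RtoC 0)).

Lemma Rcoef_split (n k' : nat) (eta tau z : C) (i j r : Z) :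
  Rcoef n k' eta tau z i j r
  = (theta_prod_except n eta (j - i - r) (- z) / theta_alpha_prod_0 n eta
     * (theta_alpha n eta (j - i + r * (Z.of_nat k' - 1)) (- z + tau)
        / theta_alpha n eta (Z.of_nat k' * r) tau))%C.
Proof. reflexivity. Qed.

Lemma Cinv_mult_l_neq_0 (a b : C) : a <> 0 -> (/ (a * b))%C = (/ a * / b)%C.
Proof.
  intros Ha; destruct (Ceq_dec b 0) as [->|Hb].
  - rewrite Cmult_0_r; unfold Cinv, RtoC; simpl; C_parts; unfold Rdiv; ring.
  - field; auto.
Qed.

Lemma Cmult_scaled_quotients (c e1 e2 e3 P Q T1 T2 : C) :
  e3 <> 0 -> (c * e1 * e2)%C = e3 ->
  (c * (e1 * P / Q * (- e2 * T1 / (- e3 * T2))))%C = (P / Q * (T1 / T2))%C.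
Proof.
  intros He3 E.
  assert (He3' : (- e3)%C <> 0)
    by (intros H; apply He3; replace e3 with (- - e3)%C by ring; rewrite H; ring).
  unfold Cdiv; rewrite Cinv_mult_l_neq_0 by exact He3'.
  transitivity (P * / Q * (T1 * / T2) * (- (c * e1 * e2) * / - e3))%C; [ring|].
  rewrite E, Cinv_r by exact He3'; ring.
Qed.

Lemma Rcoef_transpose (n k : nat) (eta tau z : C) (x y r i j : Z) :
  (k < n)%nat -> 0 < Im eta ->
  (i mod Z.of_nat n = (y - r) mod Z.of_nat n)%Z ->
  (j mod Z.of_nat n = (x + r) mod Z.of_nat n)%Z ->
  (ee (- (RtoC (INR n ^ 2) * z)) * Rcoef n (n - k) eta (- tau) (- z) x y r)%C
  = Rcoef n k eta tau z i j r.
Proof.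
  intros Hkn Hy Hi Hj; assert (Hn : (0 < n)%nat) by lia.
  assert (INR n <> 0) by (apply not_0_INR; lia).
  apply Z.cong_iff_ex in Hi as [qi Hi], Hj as [qj Hj].
  set (X := (y - x + r * (Z.of_nat (n - k) - 1))%Z).
  rewrite !Rcoef_split, (theta_prod_except_opp n eta (y - x - r) (- z)) by auto.
  rewrite (theta_prod_except_mod n eta (- (y - x - r)) (j - i - r))
    by (apply Z.cong_iff_ex; exists (qi - qj)%Z; lia).
  replace (- - z + - tau)%C with (- (- z + tau))%C by ring.
  rewrite (theta_alpha_opp n eta X), (theta_alpha_opp n eta (Z.of_nat (n - k) * r)) by auto.
  rewrite (theta_alpha_mod n eta (- X) (j - i + r * (Z.of_nat k - 1)))
    by (apply Z.cong_iff_ex; exists (qi - qj - r)%Z; unfold X; rewrite Nat2Z.inj_sub by lia; lia).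
  rewrite (theta_alpha_mod n eta (- (Z.of_nat (n - k) * r)) (Z.of_nat k * r))
    by (apply Z.cong_iff_ex; exists (- r)%Z; rewrite Nat2Z.inj_sub by lia; lia).
  apply Cmult_scaled_quotients; [apply ee_neq_0|].
  rewrite <- !ee_plus; apply ee_ext; unfold X; push_IZR; C_parts; field; auto.
Qed.

Lemma Rop_apply (n k' : nat) (eta tau z : C) (v : Z -> Z -> C) (a b : Z) :
  (0 <= a < Z.of_nat n)%Z -> (0 <= b < Z.of_nat n)%Z ->
  Rop n k' eta tau z v a b
  = csum (idx n) (fun r =>
      Rcoef n k' eta tau z ((b - r) mod Z.of_nat n) ((a + r) mod Z.of_nat n) r
      * v ((b - r) mod Z.of_nat n)%Z ((a + r) mod Z.of_nat n)%Z)%C.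
Proof.
  intros Ha Hb; unfold Rop.
  rewrite (csum_ext_in _ _ (fun i => csum (idx n) (fun r => csum (idx n) (fun j => _))))
    by (intros; apply csum_swap).
  rewrite csum_swap; apply csum_ext_in; intros r _.
  apply (csum_idx_delta2 n (fun i => b =? (i + r) mod Z.of_nat n)%Z
           (fun j => a =? (j - r) mod Z.of_nat n)%Z
           (fun i j => Rcoef n k' eta tau z i j r * v i j)%C);
    try (apply Z.mod_pos_bound; lia); intros x Hx; rewrite Z.eqb_eq.
  - now apply Zmod_add_eq_iff.
  - now apply Zmod_sub_eq_iff.
Qed.

Section Adjoint.

Variables (n k1 k2 : nat) (eta tau1 tau2 z1 z2 c : C).

Hypothesis Rcoef_transposed : forall x y r : Z,
  (c * Rcoef n k1 eta tau1 z1 x y r)%C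
  = Rcoef n k2 eta tau2 z2 ((y - r) mod Z.of_nat n)%Z ((x + r) mod Z.of_nat n)%Z r.

Lemma bform_Rop_adjoint (u v : Z -> Z -> C) :
  bform n (fun a b => c * Rop n k1 eta tau1 z1 u a b)%C v = bform n u (Rop n k2 eta tau2 z2 v).
Proof.
  set (N := Z.of_nat n); unfold bform.
  transitivity (csum (idx n) (fun r => csum (idx n) (fun a => csum (idx n) (fun b =>
    c * Rcoef n k1 eta tau1 z1 ((b - r) mod N) ((a + r) mod N) r
      * u ((b - r) mod N)%Z ((a + r) mod N)%Z * v a b))))%C.
  { rewrite <- csum3_swap; apply csum_ext_in; intros a Ha; apply csum_ext_in; intros b Hb.
    apply in_idx in Ha, Hb; rewrite Rop_apply, <- csum_scal, csum_scal_r by auto.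
    apply csum_ext_in; intros; fold N; ring. }
  transitivity (csum (idx n) (fun r => csum (idx n) (fun a => csum (idx n) (fun b =>
    u a b * (Rcoef n k2 eta tau2 z2 ((b - r) mod N) ((a + r) mod N) r
      * v ((b - r) mod N)%Z ((a + r) mod N)%Z)))))%C.
  2: { rewrite <- csum3_swap; apply csum_ext_in; intros a Ha; apply csum_ext_in; intros b Hb.
       apply in_idx in Ha, Hb; rewrite Rop_apply, <- csum_scal by auto; reflexivity. }
  apply csum_ext_in; intros r _.
  set (G := fun x y => (c * Rcoef n k1 eta tau1 z1 x y r * u x y
                        * v ((y - r) mod N)%Z ((x + r) mod N)%Z)%C).
  transitivity (csum (idx n) (fun a => csum (idx n) (fun b =>
    G ((b - r) mod N)%Z ((a + r) mod N)%Z))).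
  { apply csum_ext_in; intros a Ha; apply csum_ext_in; intros b Hb; apply in_idx in Ha, Hb.
    unfold G; now rewrite Zmod_add_sub_small, Zmod_sub_add_small. }
  rewrite csum2_idx_flip; apply csum_ext_in; intros a _; apply csum_ext_in; intros b _.
  unfold G; rewrite Rcoef_transposed; fold N; ring.
Qed.

End Adjoint.

Theorem lemma7p3 (n k : nat) (eta tau z : C) :
  (1 <= k)%nat -> (k < n)%nat -> Nat.gcd n k = 1%nat ->
  0 < Im eta ->
  ~ (exists a b : Z, tau = Cdiv (Cplus (RtoC (IZR a)) (Cmult (RtoC (IZR b)) eta)) (RtoC (INR n))) ->
  forall u v : Z -> Z -> C,
    bform n
      (fun a b => Cmult (ee (Copp (Cmult (RtoC (INR n ^ 2)) z)))
                        (Rop n (n - k) eta (Copp tau) (Copp z) u a b))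
      v
    = bform n u (Rop n k eta tau z v).
Proof.
  intros _ Hkn _ Hy _ u v.
  apply bform_Rop_adjoint; intros x y r.
  apply Rcoef_transpose; auto; apply Zmod_mod.
Qed.
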